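(* Let $\mathbb H$ be the real quaternion algebra and $f(z)=z^n+a_{n-1}z^{n-1}+\dots+a_1z+a_0$ with $a_0,\dots,a_{n-1}\in\mathbb H$, $a_0\neq0$, evaluated as $f(z_0)=z_0^n+a_{n-1}z_0^{n-1}+\dots+a_0$. Set $a_n=1$ and define polynomials in commuting real-central variables $r,N$ with quaternion coefficients $$g(r,N)=\sum_{k=1}^n a_k\sum_{m=0}^{\lfloor (k-1)/2\rfloor}\binom{k}{2m+1}(-1)^mN^mr^{k-2m-1},\qquad h(r,N)=a_0+\sum_{k=1}^n a_k\sum_{m=0}^{\lfloor k/2\rfloor}\binom{k}{2m}(-1)^mN^mr^{k-2m}.$$ For $z_0\in\mathbb H$ let $r_0=\Re(z_0)$, $x_0=\Im(z_0)$, $N_0=-x_0^2$. Then $z_0$ is a root of $f$ if and only if one of the following holds: (1) $g(r_0,N_0)=h(r_0,N_0)=0$; or (2) $(r_0,N_0)$ satisfies $-g(r,N)\overline{g(r,N)}g(r,N)N=h(r,N)\overline{g(r,N)}h(r,N)$ and $x_0=-g(r_0,N_0)^{-1}h(r_0,N_0)$.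
   Context: For $q=c_1+c_2i+c_3j+c_4k\in\mathbb H$: $\Re(q)=c_1$, $\Im(q)=q-\Re(q)$, $\bar q=\Re(q)-\Im(q)$. For a polynomial $p(r,N)$ with quaternion coefficients, $\overline{p(r,N)}$ is obtained by conjugating the coefficients. With these $g,h$ one has $f(z_0)=g(r_0,N_0)x_0+h(r_0,N_0)$. *)

From mathcomp Require Import all_boot all_order all_algebra.
From mathcomp Require Import reals.
Set Implicit Arguments. Unset Strict Implicit. Unset Printing Implicit Defensive.
Import Order.TTheory GRing.Theory Num.Theory.
Local Open Scope ring_scope.

Section Quat.
Variable R : realType.

(* q = c1 + c2 i + c3 j + c4 k *)
Record quat := Quat { qc1 : R; qc2 : R; qc3 : R; qc4 : R }.

Definition qzero : quat := Quat 0 0 0 0.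
Definition qone : quat := Quat 1 0 0 0.
Definition qreal (r : R) : quat := Quat r 0 0 0.
Definition qadd (p q : quat) : quat :=
  Quat (qc1 p + qc1 q) (qc2 p + qc2 q) (qc3 p + qc3 q) (qc4 p + qc4 q).
Definition qopp (p : quat) : quat := Quat (- qc1 p) (- qc2 p) (- qc3 p) (- qc4 p).
(* Hamilton product: i^2 = j^2 = k^2 = ijk = -1 *)
Definition qmul (p q : quat) : quat :=
  Quat (qc1 p * qc1 q - qc2 p * qc2 q - qc3 p * qc3 q - qc4 p * qc4 q)
       (qc1 p * qc2 q + qc2 p * qc1 q + qc3 p * qc4 q - qc4 p * qc3 q)
       (qc1 p * qc3 q - qc2 p * qc4 q + qc3 p * qc1 q + qc4 p * qc2 q)
       (qc1 p * qc4 q + qc2 p * qc3 q - qc3 p * qc2 q + qc4 p * qc1 q).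
Definition qRe (q : quat) : R := qc1 q.
Definition qIm (q : quat) : quat := qadd q (qopp (qreal (qRe q))).
Definition qconj (q : quat) : quat := qadd (qreal (qRe q)) (qopp (qIm q)).
Definition qnorm2 (q : quat) : R := qc1 q ^+ 2 + qc2 q ^+ 2 + qc3 q ^+ 2 + qc4 q ^+ 2.
(* multiplicative inverse conj(q)/|q|^2 (only meaningful for q <> 0) *)
Definition qinv (q : quat) : quat := qmul (qreal (qnorm2 q)^-1) (qconj q).
Definition qpow (z : quat) (k : nat) : quat := iter k (qmul z) qone.

(* monic polynomial f(z) = z^n + a_{n-1} z^{n-1} + ... + a_0, coefficients
   on the left; a_n := 1 *)
Definition coef (n : nat) (a : nat -> quat) (k : nat) : quat :=
  if (k < n)%N then a k else qone.
Definition feval (n : nat) (a : nat -> quat) (z : quat) : quat :=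
  qadd (qpow z n) (\big[qadd/qzero]_(k < n) qmul (a k) (qpow z k)).

Definition gscal (k : nat) (r N : R) : R :=
  \sum_(0 <= m < (k.-1)./2.+1)
     'C(k, (2 * m).+1)%:R * (-1) ^+ m * N ^+ m * r ^+ (k - (2 * m).+1).
Definition hscal (k : nat) (r N : R) : R :=
  \sum_(0 <= m < k./2.+1)
     'C(k, 2 * m)%:R * (-1) ^+ m * N ^+ m * r ^+ (k - 2 * m).

(* g, h and the coefficient-conjugated polynomial gbar, evaluated at
   real values r, N of the central variables *)
Definition gpol (n : nat) (a : nat -> quat) (r N : R) : quat :=
  \big[qadd/qzero]_(1 <= k < n.+1) qmul (coef n a k) (qreal (gscal k r N)).
Definition gbarpol (n : nat) (a : nat -> quat) (r N : R) : quat :=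
  \big[qadd/qzero]_(1 <= k < n.+1) qmul (qconj (coef n a k)) (qreal (gscal k r N)).
Definition hpol (n : nat) (a : nat -> quat) (r N : R) : quat :=
  qadd (a 0%N) (\big[qadd/qzero]_(1 <= k < n.+1) qmul (coef n a k) (qreal (hscal k r N))).

End Quat.

(** Write [z = r + x] with [r] real and [x] pure imaginary. Since [x^2 = -N]
    is real, [z^k = h_k(r, N) + g_k(r, N) x] where [g_k, h_k] are the real
    polynomials of the statement (they satisfy the recurrences obtained from
    [z^(k+1) = (r + x) z^k]); hence [f(z) = g x + h] with [g = g(r, N)] and
    [h = h(r, N)]. If [g = 0] this vanishes iff [h = 0]. Otherwise it
    vanishes iff [x = -g^-1 h], and then [h gbar h = g x gbar g x =
    |g|^2 g x^2 = -g gbar g N] because [gbar g = |g|^2] is real. *)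

From HB Require Import structures.
From mathcomp Require Import all_boot all_order all_algebra.
From mathcomp Require Import reals.
From mathcomp Require Import ring lra zify.
From Stdlib Require Import Classical.
Import Order.TTheory GRing.Theory Num.Theory.
Set Implicit Arguments. Unset Strict Implicit.
Local Open Scope ring_scope.

Lemma sum_nat_widen0 (V : nmodType) (b K : nat) (F : nat -> V) : (b <= K)%N ->
  (forall m, (b <= m)%N -> F m = 0) ->
  \sum_(0 <= m < b) F m = \sum_(0 <= m < K) F m.
Proof.
move=> bK F0; rewrite (big_cat_nat (leq0n b) bK) /= [X in _ + X]big1_seq ?addr0 //.
by move=> m /andP[_]; rewrite mem_index_iota => /andP[/F0].
Qed.

Section RealParts.
Variable R : realType.
Implicit Types r N : R.

(* [gscal] and [hscal] with the summation range padded to [K]: the extra terms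
   vanish, and a range independent of [k] makes Pascal's rule act termwise. *)
Definition gsum (K k : nat) r N : R :=
  \sum_(0 <= m < K) 'C(k, (2 * m).+1)%:R * (-1) ^+ m * N ^+ m * r ^+ (k - (2 * m).+1).
Definition hsum (K k : nat) r N : R :=
  \sum_(0 <= m < K) 'C(k, 2 * m)%:R * (-1) ^+ m * N ^+ m * r ^+ (k - 2 * m).

Lemma gscal_gsum K k r N : (k < K)%N -> gscal k r N = gsum K k r N.
Proof.
have := odd_double_half k.-1; rewrite -muln2 => hk kK.
by apply: sum_nat_widen0 => [|m hm]; [lia | rewrite bin_small ?mul0r //; lia].
Qed.

Lemma hscal_hsum K k r N : (k < K)%N -> hscal k r N = hsum K k r N.
Proof.
have := odd_double_half k; rewrite -muln2 => hk kK.
by apply: sum_nat_widen0 => [|m hm]; [lia | rewrite bin_small ?mul0r //; lia].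
Qed.

Lemma gsumS K k r N : gsum K k.+1 r N = r * gsum K k r N + hsum K k r N.
Proof.
rewrite /gsum /hsum mulr_sumr -big_split /=; apply: eq_bigr => m _.
rewrite binS natrD subSS; case: (ltnP k (2 * m).+1) => hk.
  by rewrite (bin_small hk); ring.
have -> : (k - 2 * m = (k - (2 * m).+1).+1)%N by lia.
by rewrite exprS; ring.
Qed.

Lemma hsumS K k r N :
  hsum K.+1 k.+1 r N = r * hsum K.+1 k r N - N * gsum K k r N.
Proof.
rewrite /hsum /gsum big_nat_recl // [in RHS]big_nat_recl //.
rewrite mulrDr !mulr_sumr -addrA -sumrB; congr (_ + _).
  by rewrite !bin0 !subn0 exprS; ring.
apply: eq_bigr => m _.
have -> : (2 * m.+1 = (2 * m).+2)%N by lia.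
rewrite binS natrD subSS; case: (ltnP k (2 * m).+2) => hk.
  by rewrite (bin_small hk) !exprS; ring.
have -> : (k - (2 * m).+1 = (k - (2 * m).+2).+1)%N by lia.
by rewrite !exprS; ring.
Qed.

Lemma gscal0 r N : gscal 0 r N = 0.
Proof. by rewrite /gscal big_nat1 /= !mul0r. Qed.

Lemma hscal0 r N : hscal 0 r N = 1.
Proof. by rewrite /hscal big_nat1 /= !mulr1. Qed.

Lemma gscalS k r N : gscal k.+1 r N = r * gscal k r N + hscal k r N.
Proof. by rewrite !(gscal_gsum (K := k.+2)) // (hscal_hsum (K := k.+2)) // gsumS. Qed.

Lemma hscalS k r N : hscal k.+1 r N = r * hscal k r N - N * gscal k r N.
Proof.
rewrite (hscal_hsum (K := k.+3)) // hsumS -(gscal_gsum (K := k.+2)) //.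
by rewrite -(hscal_hsum (K := k.+3)) // ltnW.
Qed.

End RealParts.

Section Quaternions.
Variable R : realType.
Implicit Types (g h u v x : quat R) (r p q s : R).

Ltac qsimpl := cbv [qconj qIm qRe qadd qopp qreal qmul qzero qone qinv qnorm2 qc1 qc2 qc3 qc4].

Lemma quatP u v : qc1 u = qc1 v -> qc2 u = qc2 v -> qc3 u = qc3 v -> qc4 u = qc4 v ->
  u = v.
Proof. by case: u; case: v => /= ? ? ? ? ? ? ? ? -> -> -> ->. Qed.

Lemma qaddA : associative (@qadd R).
Proof. by move=> [? ? ? ?] [? ? ? ?] [? ? ? ?]; qsimpl; congr Quat; ring. Qed.

Lemma qaddC : commutative (@qadd R).
Proof. by move=> [? ? ? ?] [? ? ? ?]; qsimpl; congr Quat; ring. Qed.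

Lemma qadd0q : left_id (qzero R) (@qadd R).
Proof. by move=> [? ? ? ?]; qsimpl; congr Quat; ring. Qed.

HB.instance Definition _ :=
  Monoid.isComLaw.Build (quat R) (qzero R) (@qadd R) qaddA qaddC qadd0q.

Lemma qc1_sum I (rs : seq I) (P : pred I) (F : I -> quat R) :
  qc1 (\big[@qadd R/qzero R]_(i <- rs | P i) F i) = \sum_(i <- rs | P i) qc1 (F i).
Proof. exact: (big_morph (@qc1 R) (id1 := 0) (op1 := +%R)). Qed.

Lemma qc2_sum I (rs : seq I) (P : pred I) (F : I -> quat R) :
  qc2 (\big[@qadd R/qzero R]_(i <- rs | P i) F i) = \sum_(i <- rs | P i) qc2 (F i).
Proof. exact: (big_morph (@qc2 R) (id1 := 0) (op1 := +%R)). Qed.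

Lemma qc3_sum I (rs : seq I) (P : pred I) (F : I -> quat R) :
  qc3 (\big[@qadd R/qzero R]_(i <- rs | P i) F i) = \sum_(i <- rs | P i) qc3 (F i).
Proof. exact: (big_morph (@qc3 R) (id1 := 0) (op1 := +%R)). Qed.

Lemma qc4_sum I (rs : seq I) (P : pred I) (F : I -> quat R) :
  qc4 (\big[@qadd R/qzero R]_(i <- rs | P i) F i) = \sum_(i <- rs | P i) qc4 (F i).
Proof. exact: (big_morph (@qc4 R) (id1 := 0) (op1 := +%R)). Qed.

Lemma qconj_sum I (rs : seq I) (P : pred I) (F : I -> quat R) :
  qconj (\big[@qadd R/qzero R]_(i <- rs | P i) F i) =
  \big[@qadd R/qzero R]_(i <- rs | P i) qconj (F i).
Proof.
apply: big_morph => [[? ? ? ?] [? ? ? ?]|]; by qsimpl; congr Quat; ring.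
Qed.

Lemma qmul_conj_real u r : qconj (qmul u (qreal r)) = qmul (qconj u) (qreal r).
Proof. by case: u => ? ? ? ?; qsimpl; congr Quat; ring. Qed.

Lemma qRe_qIm u : qRe (qIm u) = 0.
Proof. by case: u => ? ? ? ?; qsimpl; ring. Qed.

Lemma qpow_Quat r p q s k :
  qpow (Quat r p q s) k =
  Quat (hscal k r (p ^+ 2 + q ^+ 2 + s ^+ 2)) (gscal k r (p ^+ 2 + q ^+ 2 + s ^+ 2) * p)
       (gscal k r (p ^+ 2 + q ^+ 2 + s ^+ 2) * q) (gscal k r (p ^+ 2 + q ^+ 2 + s ^+ 2) * s).
Proof.
elim: k => [|k IH]; first by rewrite /= gscal0 hscal0 !mul0r.
by rewrite /qpow iterS -/(qpow _ k) IH gscalS hscalS /qmul /=; congr Quat; ring.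
Qed.

Lemma qmul0q x : qmul (qzero R) x = qzero R.
Proof. by case: x => ? ? ? ?; qsimpl; congr Quat; ring. Qed.

Lemma qmul_oppr g x : qmul g (qopp x) = qopp (qmul g x).
Proof. by case: g; case: x => ? ? ? ? ? ? ? ?; qsimpl; congr Quat; ring. Qed.

Lemma qoppK : involutive (@qopp R).
Proof. by case=> ? ? ? ?; qsimpl; congr Quat; ring. Qed.

Lemma qaddNq u : qadd (qopp u) u = qzero R.
Proof. by case: u => ? ? ? ?; qsimpl; congr Quat; ring. Qed.

Lemma qadd_eq0 u h : qadd u h = qzero R <-> h = qopp u.
Proof.
split=> [|->]; last by rewrite qaddC qaddNq.
by case: u; case: h => ? ? ? ? ? ? ? ?; qsimpl; case=> *; congr Quat; lra.
Qed.

Lemma qnorm2_eq0 g : qnorm2 g = 0 -> g = qzero R.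
Proof.
case: g => c1 c2 c3 c4; rewrite /qnorm2 /= => g0.
by congr Quat; nra.
Qed.

Lemma qinv_mulK g x : g <> qzero R -> qmul (qinv g) (qmul g x) = x.
Proof.
move=> g0; have : qnorm2 g <> 0 by move/qnorm2_eq0.
case: g g0; case: x => ? ? ? ? ? ? ? ? _; qsimpl => /eqP nz.
by congr Quat; field.
Qed.

Lemma qmul_qinvK g h : g <> qzero R -> qmul g (qmul (qinv g) h) = h.
Proof.
move=> g0; have : qnorm2 g <> 0 by move/qnorm2_eq0.
case: g g0; case: h => ? ? ? ? ? ? ? ? _; qsimpl => /eqP nz.
by congr Quat; field.
Qed.

(* [gbar g = |g|^2] is real, hence central, and [x^2 = -N] for pure [x]. *)
Lemma qmul_pure_sandwich g x : qRe x = 0 ->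
  qmul (qmul (qopp (qmul g x)) (qconj g)) (qopp (qmul g x)) =
  qopp (qmul (qmul (qmul g (qconj g)) g) (qreal (qRe (qopp (qmul x x))))).
Proof. by case: x => ? ? ? ? /= ->; case: g => ? ? ? ?; qsimpl; congr Quat; ring. Qed.

Lemma qlinear_eq0 g h x : qRe x = 0 ->
  let N := qRe (qopp (qmul x x)) in
  qadd (qmul g x) h = qzero R <->
  (g = qzero R /\ h = qzero R) \/
  (g <> qzero R /\
   qopp (qmul (qmul (qmul g (qconj g)) g) (qreal N)) = qmul (qmul h (qconj g)) h /\
   x = qopp (qmul (qinv g) h)).
Proof.
move=> x_pure N; split=> [gxh0|[[-> ->]|[g0 [_ ->]]]].
- have h_eq : h = qopp (qmul g x) by apply/qadd_eq0.
  have [g0|g0] := classic (g = qzero R).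
    by left; rewrite g0 qmul0q qadd0q in gxh0.
  right; split=> //; split; first by rewrite h_eq qmul_pure_sandwich.
  by rewrite h_eq qmul_oppr qinv_mulK // qoppK.
- by rewrite qmul0q qadd0q.
- by rewrite qmul_oppr qmul_qinvK // qaddNq.
Qed.

End Quaternions.

Section Evaluation.
Variables (R : realType) (n : nat) (a : nat -> quat R).

Lemma feval_coef z :
  feval n a z = \big[@qadd R/qzero R]_(0 <= k < n.+1) qmul (coef n a k) (qpow z k).
Proof.
rewrite /feval big_nat_recr //= {2}/coef ltnn big_mkord.
rewrite (eq_bigr (fun k : 'I_n => qmul (coef n a k) (qpow z k))) => [|i _]; last first.
  by rewrite /coef ltn_ord.
by apply: quatP; rewrite /= ?(qc1_sum, qc2_sum, qc3_sum, qc4_sum); ring.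
Qed.

Lemma gbarpol_conj r N : gbarpol n a r N = qconj (gpol n a r N).
Proof. by rewrite /gbarpol /gpol qconj_sum; apply: eq_bigr => k _; rewrite qmul_conj_real. Qed.

Lemma feval_gpol_hpol z : (0 < n)%N ->
  let N := qRe (qopp (qmul (qIm z) (qIm z))) in
  feval n a z = qadd (qmul (gpol n a (qRe z) N) (qIm z)) (hpol n a (qRe z) N).
Proof.
case: z => r p q s n_gt0 N.
have -> : N = p ^+ 2 + q ^+ 2 + s ^+ 2 by rewrite /N /=; ring.
rewrite feval_coef; under eq_bigr do rewrite qpow_Quat.
rewrite big_nat_recl // gscal0 hscal0 /gpol /hpol !big_add1 /=.
have -> : coef n a 0 = a 0 by rewrite /coef n_gt0.
apply: quatP => /=; rewrite ?(qc1_sum, qc2_sum, qc3_sum, qc4_sum) /=.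
all: rewrite [RHS]addrCA; congr (_ + _); first by ring.
all: by rewrite !mulr_suml -!sumrN -!big_split /=; apply: eq_bigr => i _; ring.
Qed.

End Evaluation.

Theorem mainTheorem17 (R : realType) (n : nat) (a : nat -> quat R) (z0 : quat R) :
  (0 < n)%N ->
  a 0%N <> qzero R ->
  let r0 := qRe z0 in
  let x0 := qIm z0 in
  let N0 := qRe (qopp (qmul x0 x0)) in
  feval n a z0 = qzero R <->
  ((gpol n a r0 N0 = qzero R /\ hpol n a r0 N0 = qzero R) \/
   (gpol n a r0 N0 <> qzero R /\
    qopp (qmul (qmul (qmul (gpol n a r0 N0) (gbarpol n a r0 N0)) (gpol n a r0 N0))
               (qreal N0))
      = qmul (qmul (hpol n a r0 N0) (gbarpol n a r0 N0)) (hpol n a r0 N0) /\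
    x0 = qopp (qmul (qinv (gpol n a r0 N0)) (hpol n a r0 N0)))).
Proof.
move=> n_gt0 _ r0 x0 N0.
rewrite feval_gpol_hpol // gbarpol_conj.
exact: (qlinear_eq0 _ _ (qRe_qIm z0)).
Qed.
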